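(* Let $d\ge2$, $n\ge1$, $H_i(X)=\sum_{|\alpha|=d}\frac{H_{i,\alpha}}{\alpha!}X^\alpha$ ($i\in[n]$) with complex coefficients, and suppose $(JH)^p=0$ for some integer $1\le p\le n$. Then for every $n$-type tree $\mathcal{T}=(T,\tau)$ with $T\in\mathcal{C}_k^{(d)}$ and every path $(v_0,\dots,v_p)$ in $T$, $$\sum_{\mathcal{T}'\in\mathrm{Sh}(\mathcal{T};v_0,\dots,v_p)}\mathcal{E}_H(\mathcal{T}')=0.$$
   Context: A $d$-Catalan tree is a rooted planar tree in which each vertex has $0$ or $d$ children; $\mathcal{C}_k^{(d)}$ is the set of those with $k$ internal vertices. An $n$-type tree $(T,\tau)$ is such a tree with a type function $\tau$ from its vertices to $[n]$. A path $(v_0,\dots,v_p)$ satisfies: $v_i$ is a child of $v_{i-1}$. The labelled shuffle class $\mathrm{Sh}(\mathcal{T};v_0,\dots,v_p)$ is the set of (distinct) $n$-type trees obtained from $\mathcal{T}$ by (i) rearranging the labelled subtrees subtended by the $(d-1)p$ siblings of $v_1,\dots,v_p$ among those sibling positions, and (ii) giving arbitrary new types in $[n]$ to $v_1,\dots,v_{p-1}$. For an internal vertex $v$, $\mu(v)\in\mathbb{Z}^n_{\ge0}$ counts its children of each type, and $\mathcal{E}_H(\mathcal{T})=\prod_{v\text{ internal}}H_{\tau(v),\mu(v)}$. $JH$ is the Jacobian matrix of $H=(H_1,\dots,H_n)$. *)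

From HB Require Import structures.
From mathcomp Require Import all_boot all_order all_algebra.
From mathcomp Require Import reals.
From mathcomp Require Import complex.
From mathcomp Require Import mpoly.
Set Implicit Arguments. Unset Strict Implicit. Unset Printing Implicit Defensive.
Import GRing.Theory.
Local Open Scope ring_scope.

(* n-type planar trees: a leaf [GenTree.Leaf x] or an internal vertex
   [GenTree.Node x children]; x : nat is the type (meant to lie in [0, n)). *)
Definition ttree := GenTree.tree nat.

Definition rtype (t : ttree) : nat :=
  match t with GenTree.Leaf x => x | GenTree.Node x _ => x end.

Definition settype (x : nat) (t : ttree) : ttree :=
  match t with GenTree.Leaf _ => GenTree.Leaf x | GenTree.Node _ ch => GenTree.Node x ch end.

Fixpoint wf_tree (d n : nat) (t : ttree) : bool :=
  match t with
  | GenTree.Leaf x => (x < n)%N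
  | GenTree.Node x ch => [&& (x < n)%N, size ch == d & all (wf_tree d n) ch]
  end.

(* [valid_path t cs]: starting at the root of t and following child indices cs,
   every vertex met before the last one is internal and every index is in range;
   i.e. cs describes a downward path (v_0 = root, v_1, ..., v_{|cs|}) in t. *)
Fixpoint valid_path (t : ttree) (cs : seq nat) : bool :=
  match cs with
  | [::] => true
  | c :: cs' => match t with
                | GenTree.Leaf _ => false
                | GenTree.Node _ ch => (c < size ch)%N && valid_path (nth t ch c) cs'
                end
  end.

Fixpoint subtree_at (t : ttree) (a : seq nat) : ttree :=
  match a with
  | [::] => t
  | c :: a' => match t with
               | GenTree.Leaf _ => t
               | GenTree.Node _ ch => subtree_at (nth t ch c) a'
               end
  end.

Fixpoint replace_at (t : ttree) (a : seq nat) (s : ttree) : ttree :=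
  match a with
  | [::] => s
  | c :: a' => match t with
               | GenTree.Leaf _ => t
               | GenTree.Node x ch =>
                   GenTree.Node x (set_nth t ch c (replace_at (nth t ch c) a' s))
               end
  end.

(* the subtrees subtended by the siblings of v_1, ..., v_p (in order) *)
Fixpoint spine_sibs (t : ttree) (cs : seq nat) : seq ttree :=
  match cs with
  | [::] => [::]
  | c :: cs' => match t with
                | GenTree.Leaf _ => [::]
                | GenTree.Node _ ch =>
                    take c ch ++ drop c.+1 ch ++ spine_sibs (nth t ch c) cs'
                end
  end.

(* rebuild the tree along the path cs, placing the subtrees [sibs] (in order) at
   the sibling positions of v_1..v_p, and giving v_1..v_{p-1} the types ts. *)
Fixpoint regraft (t : ttree) (cs : seq nat) (ts : seq nat) (sibs : seq ttree) : ttree :=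
  match cs with
  | [::] => t
  | c :: cs' => match t with
                | GenTree.Leaf _ => t
                | GenTree.Node x ch =>
                    let m := (size ch).-1 in
                    let S := take m sibs in
                    let v := nth t ch c in
                    let v' := if cs' is [::] then v else settype (head 0%N ts) v in
                    GenTree.Node x (take c S ++ regraft v' cs' (behead ts) (drop m sibs) :: drop c S)
                end
  end.

Fixpoint typeseqs (m n : nat) : seq (seq nat) :=
  match m with
  | 0 => [:: [::]]
  | m'.+1 => [seq i :: s | i <- iota 0 n, s <- typeseqs m' n]
  end.

(* Labelled shuffle class Sh(T; v_0,...,v_p), where v_0 has address a in T and
   cs = (c_1,...,c_p) are the child indices of v_1,...,v_p; listed without
   repetition. *)
Definition shuffle_class (n : nat) (T : ttree) (a cs : seq nat) : seq ttree :=
  let t0 := subtree_at T a in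
  undup [seq replace_at T a (regraft t0 cs ts sibs)
        | sibs <- permutations (spine_sibs t0 cs), ts <- typeseqs (size cs).-1 n].

Definition mu (n : nat) (ch : seq ttree) : 'X_{1..n} :=
  [multinom (count (fun c => rtype c == i) ch) | i < n].

Definition mfact (n : nat) (m : 'X_{1..n}) : nat := (\prod_(i < n) (m i)`!)%N.

Section Coefs.
Variables (C : fieldType) (n : nat).
(* H_{i,alpha} where H_i = sum_alpha H_{i,alpha}/alpha! X^alpha *)
Definition Hcoef (H : 'I_n -> {mpoly C[n]}) (x : nat) (m : 'X_{1..n}) : C :=
  if insub x is Some i then (mfact m)%:R * (H i)@_m else 0.

Fixpoint EH (H : 'I_n -> {mpoly C[n]}) (t : ttree) : C :=
  match t with
  | GenTree.Leaf _ => 1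
  | GenTree.Node x ch => Hcoef H x (mu n ch) * foldr (fun c acc => EH H c * acc) 1 ch
  end.

Definition jacobian (H : 'I_n -> {mpoly C[n]}) : 'M[{mpoly C[n]}]_n :=
  \matrix_(i < n, j < n) mderiv j (H i).
End Coefs.

(* Along the path only the sibling subtrees are moved and only v_1, ..., v_(p-1)
   retyped, so E_H of a tree of the shuffle class is a constant (coming from T
   off the path) times the product of the H_{tau(v), mu(v)} over v_0, ..., v_(p-1),
   which only depends on the word of root types of the rearranged siblings and
   on the new types.  As H_i is homogeneous of degree d = m + 1, summing these
   products over all path types and all words with a given letter count b gives
   (m!)^p times the coefficient of X^b in ((JH)^p)_{tau(v_0), tau(v_p)}, which is
   zero.  Finally, summing over the symmetric group S_(mp) acting on the siblings
   shows that the sum over rearrangements of the sibling subtrees and the sum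
   over rearrangements of their type word agree up to positive integer factors
   (orders of stabilisers), so in characteristic 0 the shuffle sum vanishes. *)

From mathcomp Require Import all_boot all_algebra.
From mathcomp Require Import reals complex mpoly.
From mathcomp Require Import fingroup perm ring.
Set Implicit Arguments. Unset Strict Implicit. Unset Printing Implicit Defensive.
Import GRing.Theory Num.Theory.
Local Open Scope ring_scope.

Lemma big_pred1_seq (T : eqType) (V : nmodType) (r : seq T) x (F : T -> V) :
  uniq r -> x \in r -> \sum_(t <- r | t == x) F t = F x.
Proof.
move=> Ur xr; rewrite (big_rem x) //= eqxx big1_seq ?addr0 // => t /andP [/eqP ->].
by rewrite mem_rem_uniq // inE eqxx.
Qed.

Lemma mem_allpairs_cons (T : eqType) (r1 : seq T) (r2 : seq (seq T)) x w :
  (x :: w \in [seq i :: s | i <- r1, s <- r2]) = (x \in r1) && (w \in r2).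
Proof.
apply/allpairsP/andP => [[[i s] /= [? ? [-> ->]]] // | [? ?]].
by exists (x, w).
Qed.

Section Words.
Variable n : nat.

Lemma mem_typeseqs l w :
  (w \in typeseqs l n) = (size w == l) && all (fun x => (x < n)%N) w.
Proof.
elim: l w => [|l IH] [|x w] //=.
  by apply/negbTE/allpairsP => -[[i s] /= [_ _]].
by rewrite mem_allpairs_cons IH mem_iota add0n /= eqSS andbCA.
Qed.

Lemma typeseqs_uniq l : uniq (typeseqs l n).
Proof.
elim: l => [|l IH] //=; apply: allpairs_uniq => //; first exact: iota_uniq.
by move=> [? ?] [? ?] _ _ /= [-> ->].
Qed.

Lemma big_typeseqs_cons (V : nmodType) l (F : seq nat -> V) :
  \sum_(w <- typeseqs l.+1 n) F w = \sum_(i < n) \sum_(w <- typeseqs l n) F (val i :: w).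
Proof.
rewrite /= big_allpairs_dep /=.
have -> : iota 0 n = index_iota 0 n by rewrite /index_iota subn0.
by rewrite big_mkord.
Qed.

Lemma big_typeseqsD (V : nmodType) a b (F : seq nat -> V) :
  \sum_(w <- typeseqs (a + b) n) F w =
  \sum_(v <- typeseqs a n) \sum_(w <- typeseqs b n) F (v ++ w).
Proof.
elim: a F => [|a IH] F; first by rewrite /= big_seq1.
by rewrite addSn !big_typeseqs_cons; apply: eq_bigr => i _; rewrite IH.
Qed.

Definition word_mnm (w : seq nat) : 'X_{1..n} :=
  [multinom count (fun x : nat => x == i) w | i < n].

Lemma word_mnmE w (i : 'I_n) : word_mnm w i = count (fun x : nat => x == i) w.
Proof. by rewrite mnmE. Qed.

Lemma word_mnm_cat v w : word_mnm (v ++ w) = (word_mnm v + word_mnm w)%MM.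
Proof. by apply/mnmP => i; rewrite mnmDE !word_mnmE count_cat. Qed.

Lemma word_mnm_nil : word_mnm [::] = 0%MM.
Proof. by apply/mnmP => i; rewrite mnm0E. Qed.

Lemma word_mnm_cons (k : 'I_n) w : word_mnm (val k :: w) = (U_(k) + word_mnm w)%MM.
Proof.
rewrite -cat1s word_mnm_cat; congr (_ + _)%MM.
by apply/mnmP => i; rewrite mnm1E word_mnmE /= addn0.
Qed.

Lemma word_mnm_perm v w : perm_eq v w -> word_mnm v = word_mnm w.
Proof. by move=> /seq.permP E; apply/mnmP => i; rewrite !word_mnmE E. Qed.

Lemma eq_word_mnm v w : all (fun x => (x < n)%N) v -> all (fun x => (x < n)%N) w ->
  (word_mnm v == word_mnm w) = perm_eq v w.
Proof.
move=> Hv Hw; apply/eqP/idP => [E|]; last exact: word_mnm_perm.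
apply/allP => x; rewrite mem_cat => /orP xvw.
have xn : (x < n)%N by case: xvw => [/(allP Hv) | /(allP Hw)].
have := congr1 (fun b : 'X_{1..n} => b (Ordinal xn)) E.
by rewrite /= !word_mnmE => ->; rewrite eqxx.
Qed.

Lemma big_permutations_typeseqs (V : nmodType) U (F : seq nat -> V) :
  all (fun x => (x < n)%N) U ->
  \sum_(w <- permutations U) F w =
  \sum_(w <- typeseqs (size U) n | word_mnm w == word_mnm U) F w.
Proof.
move=> Un; rewrite -[RHS]big_filter; apply/perm_big/uniq_perm.
- exact: permutations_uniq.
- exact/filter_uniq/typeseqs_uniq.
move=> w; rewrite mem_permutations mem_filter mem_typeseqs.
apply/idP/idP => [Uw | /andP [E /andP [_ wn]]]; last by rewrite -(eq_word_mnm wn Un).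
by rewrite (word_mnm_perm Uw) (perm_size Uw) (perm_all _ Uw) Un !eqxx.
Qed.

Definition nwords l (b : 'X_{1..n}) : nat :=
  \sum_(v <- typeseqs l n) (word_mnm v == b : nat).

Lemma mfact0 : mfact (0%MM : 'X_{1..n}) = 1%N.
Proof. by rewrite /mfact big1 // => i _; rewrite mnm0E. Qed.

Lemma mfactDU (b : 'X_{1..n}) k : mfact (b + U_(k))%MM = (mfact b * (b k).+1)%N.
Proof.
rewrite /mfact (bigD1 k) //= [in RHS](bigD1 k) //= mnmDE mnm1E eqxx addn1 factS.
rewrite [RHS]mulnC mulnA; congr (_ * _)%N.
by apply: eq_bigr => i /negbTE ik; rewrite mnmDE mnm1E eq_sym ik addn0.
Qed.

Lemma nwordsS l b :
  nwords l.+1 b = (\sum_(i < n) (0 < b i)%N * nwords l (b - U_(i))%MM)%N.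
Proof.
rewrite /nwords big_typeseqs_cons; apply: eq_bigr => i _.
case: (posnP (b i)) => bi.
  rewrite mul0n big1 // => v _; rewrite word_mnm_cons; case: eqP => // E.
  by move: bi; rewrite -E mnmDE mnm1E eqxx.
rewrite mul1n; apply: eq_bigr => v _; congr nat_of_bool.
rewrite word_mnm_cons addmC; apply/eqP/eqP => [<-|->]; first by rewrite addmK.
by rewrite submK // lep1mP -lt0n.
Qed.

Lemma nwords_mfact l b : (nwords l b * mfact b)%N = ((mdeg b == l) * l`!)%N.
Proof.
elim: l b => [|l IH] b.
  rewrite /nwords big_seq1 word_mnm_nil eq_sym -mdeg_eq0.
  by case: eqP => [/eqP|] //; rewrite mdeg_eq0 => /eqP ->; rewrite mfact0.
rewrite nwordsS big_distrl /=.
transitivity (\sum_(i < n) ((mdeg b == l.+1) * (b i * l`!)))%N.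
  apply: eq_bigr => i _; case: (posnP (b i)) => [-> | bi]; first by rewrite !muln0.
  have Ub : (U_(i) <= b)%MM by rewrite lep1mP -lt0n.
  rewrite -{2 3}(submK Ub) mfactDU mdegD mdeg1 addn1 eqSS mul1n mulnA IH.
  by rewrite mnmBE mnm1E eqxx subn1 prednK // mulnAC mulnA.
rewrite -big_distrr -big_distrl /= -mdegE.
by case: eqP => [->|]; rewrite ?mul0n // mul1n factS.
Qed.

End Words.

Section PermutedTuples.
Variables (T : eqType) (N : nat).
Implicit Types (s : N.-tuple T) (σ τ : 'S_N).

Definition permute s σ : seq T := [tuple tnth s (σ i) | i < N].

Definition stab s := [pred σ | permute s σ == s].

Lemma perm_permute s σ : perm_eq (permute s σ) s.
Proof. by apply/tuple_permP; exists σ. Qed.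

Lemma eq_permute s σ τ :
  (permute s σ == permute s τ) = [forall i, tnth s (σ i) == tnth s (τ i)].
Proof.
apply/eqP/forallP => [E i | E].
  have /val_inj/(congr1 (fun t : N.-tuple T => tnth t i)) := E.
  by rewrite /= !tnth_mktuple => ->.
by congr tval; apply: eq_from_tnth => i; rewrite !tnth_mktuple; apply/eqP.
Qed.

Lemma permute1 s : permute s 1 = s.
Proof. by congr tval; apply: eq_from_tnth => i; rewrite tnth_mktuple perm1. Qed.

Lemma card_permute_fiber s τ :
  #|[pred σ | permute s σ == permute s τ]| = #|stab s|.
Proof.
rewrite -!sum1_card (reindex_inj (mulgI τ)) /=; apply: eq_bigl => σ.
rewrite !inE -(permute1 s) !eq_permute.
apply/forallP/forallP => E i; last by rewrite permM; have := E (τ i); rewrite perm1.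
by have := E (τ^-1 i)%g; rewrite permM permKV perm1.
Qed.

Lemma stab_gt0 s : (0 < #|stab s|)%N.
Proof. by apply/card_gt0P; exists 1%g; rewrite inE permute1. Qed.

(* Each rearrangement of s is hit by exactly #|stab s| permutations. *)
Lemma sum_permute (V : nmodType) s (F : seq T -> V) :
  \sum_σ F (permute s σ) = (\sum_(t <- permutations s) F t) *+ #|stab s|.
Proof.
transitivity (\sum_σ \sum_(t <- permutations s | t == permute s σ) F t).
  apply: eq_bigr => σ _; rewrite big_pred1_seq ?permutations_uniq //.
  by rewrite mem_permutations perm_permute.
under eq_bigr do rewrite big_mkcond.
rewrite exchange_big /= -sumrMnl big_seq [RHS]big_seq; apply: eq_bigr => t.
rewrite mem_permutations => /tuple_permP [τ Et].
rewrite -big_mkcond /= (eq_bigl [pred σ | permute s σ == permute s τ]).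
  by rewrite sumr_const card_permute_fiber.
by move=> σ; rewrite inE -[permute s τ]Et eq_sym.
Qed.

End PermutedTuples.

Lemma sum_permutations_map (T U : eqType) (V : nmodType) N (s : N.-tuple T)
    (f : T -> U) (G : seq U -> V) :
  (\sum_(t <- permutations s) G (map f t)) *+ #|stab s| =
  (\sum_(w <- permutations (map f s)) G w) *+ #|stab (map_tuple f s)|.
Proof.
rewrite -(sum_permute _ (G \o map f)) -[map f s]/(tval (map_tuple f s)) -sum_permute.
apply: eq_bigr => σ _; congr G; rewrite /= -map_comp.
by apply: eq_map => i /=; rewrite tnth_map.
Qed.

Lemma sum_permutations_map_eq0 (T U : eqType) (V : numDomainType) (s : seq T)
    (f : T -> U) (G : seq U -> V) :
  \sum_(w <- permutations (map f s)) G w = 0 ->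
  \sum_(t <- permutations s) G (map f t) = 0.
Proof.
move=> G0; have /eqP := sum_permutations_map (in_tuple s) f G.
by rewrite [X in _ == X *+ _]G0 mul0rn mulrn_eq0 eqn0Ngt stab_gt0 => /eqP.
Qed.

Section SpineWeight.
Variables (C : fieldType) (n m : nat) (H : 'I_n -> {mpoly C[n]}).
Hypothesis homH : forall i, H i \is m.+1.-homog.

Lemma Hcoef_ord (i : 'I_n) b : Hcoef H i b = (mfact b)%:R * (H i)@_b.
Proof. by rewrite /Hcoef valK. Qed.

(* The coefficient of X^b on the left is the number m!/b! of words with
   monomial b (nwords_mfact) times (b + U_k)! [X^(b + U_k)] H_i. *)
Lemma sum_words_Hcoef (i k : 'I_n) :
  \sum_(v <- typeseqs m n) Hcoef H i (word_mnm n (val k :: v)) *: 'X_[word_mnm n v] =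
  (m`!)%:R *: mderiv k (H i).
Proof.
apply/mpolyP => b; rewrite raddf_sum /=.
transitivity (\sum_(v <- typeseqs m n)
   (word_mnm n v == b)%:R * ((mfact (b + U_(k))%MM)%:R * (H i)@_(b + U_(k)))).
  apply: eq_bigr => v _; rewrite mcoeffZ mcoeffX Hcoef_ord word_mnm_cons addmC.
  by case: eqP => [->|_]; rewrite ?mulr1 ?mulr0 ?mul1r ?mul0r.
rewrite -mulr_suml -natr_sum -/(nwords m b) mcoeffZ mcoeff_mderiv.
have [Hb|Hb] := eqVneq (mdeg b) m.
  rewrite -[(H i)@_ _ *+ _]mulr_natl !mulrA -!natrM; congr (_%:R * _).
  by rewrite mfactDU mulnA nwords_mfact Hb eqxx mul1n.
by rewrite (dhomog_nemf_coeff (homH i)) ?mulr0 ?mul0rn ?mulr0 //= mdegD mdeg1 addn1 eqSS.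
Qed.

(* The product of the H_{tau(v), mu(v)} over v_0, ..., v_(l-1) on a path
   with tau(v_0) = i, tau(v_1 .. v_(l-1)) = ts and tau(v_l) = j, the m siblings
   of v_(r+1) having the types u_(mr), ..., u_(mr+m-1). *)
Fixpoint spine_weight (i l : nat) (ts u : seq nat) (j : nat) : C :=
  match l with
  | 0 => 1
  | l'.+1 => let k := (if l' is 0 then j else head 0%N ts) in
      Hcoef H i (word_mnm n (k :: take m u)) * spine_weight k l' (behead ts) (drop m u) j
  end.

Definition spine_poly l (i j : nat) : {mpoly C[n]} :=
  \sum_(w <- typeseqs (m * l) n) \sum_(ts <- typeseqs l.-1 n)
     spine_weight i l ts w j *: 'X_[word_mnm n w].

Lemma spine_polyE l (i j : 'I_n) : (0 < l)%N ->
  spine_poly l i j = (m`!)%:R ^+ l *: (jacobian H ^+ l) i j.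
Proof.
elim: l i => [//|[|l] IH] i _.
  rewrite /spine_poly muln1 /= big_seq.
  under eq_bigr => w.
    rewrite mem_typeseqs => /andP [/eqP sw _].
    rewrite big_seq1 /= mulr1 take_oversize ?sw //.
    over.
  by rewrite -big_seq sum_words_Hcoef expr1 mxE.
rewrite [jacobian H ^+ _]exprS -[jacobian H * _]/(mulmx _ _) mxE scaler_sumr.
under [RHS]eq_bigr => k _.
  rewrite exprS -scalerA scalerAr scalerAl -IH // mxE -sum_words_Hcoef /spine_poly.
  rewrite mulr_suml; under eq_bigr => v _ do rewrite mulr_sumr.
  over.
rewrite /= exchange_big /spine_poly mulnS big_typeseqsD big_seq [RHS]big_seq.
apply: eq_bigr => v; rewrite mem_typeseqs => /andP [/eqP sv _].
rewrite [RHS]exchange_big; apply: eq_bigr => w _.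
rewrite big_typeseqs_cons; apply: eq_bigr => k _; rewrite mulr_sumr.
apply: eq_bigr => ts _.
rewrite [spine_weight _ _ _ _ _]/= take_size_cat // drop_size_cat // word_mnm_cat.
by rewrite mpolyXD -scalerA scalerAr scalerAl.
Qed.

Lemma sum_permutations_spine_weight_eq0 p (i j : 'I_n) U : (0 < p)%N ->
  jacobian H ^+ p = 0 -> size U = (m * p)%N -> all (fun x => (x < n)%N) U ->
  \sum_(w <- permutations U) \sum_(ts <- typeseqs p.-1 n) spine_weight i p ts w j = 0.
Proof.
move=> p_gt0 Hp sU Un.
transitivity ((spine_poly p i j)@_(word_mnm n U)); last first.
  by rewrite spine_polyE // Hp mxE scaler0 mcoeff0.
rewrite (@big_permutations_typeseqs n) // sU /spine_poly raddf_sum big_mkcond.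
apply: eq_bigr => w _; rewrite raddf_sum /=; case: eqP => [->|ne].
  by apply: eq_bigr => ts _; rewrite mcoeffZ mcoeffX eqxx mulr1.
by rewrite big1 // => ts _; rewrite mcoeffZ mcoeffX; case: eqP => // _; rewrite mulr0.
Qed.

End SpineWeight.

Lemma set_nth_split (T : Type) (x0 : T) s c y : (c < size s)%N ->
  set_nth x0 s c y = take c s ++ y :: drop c.+1 s.
Proof. by move=> cs; rewrite set_nthE cs. Qed.

Lemma nth_split (T : Type) (x0 : T) s c : (c < size s)%N ->
  s = take c s ++ nth x0 s c :: drop c.+1 s.
Proof. by move=> cs; rewrite -(drop_nth x0 cs) cat_take_drop. Qed.

Section TreeSurgery.
Variables (d n : nat).

Lemma rtype_settype k t : rtype (settype k t) = k.
Proof. by case: t. Qed.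

Lemma rtype_regraft t cs ts sibs : rtype (regraft t cs ts sibs) = rtype t.
Proof. by case: cs => [|c cs] //=; case: t. Qed.

Lemma rtype_replace T a s : rtype s = rtype (subtree_at T a) ->
  rtype (replace_at T a s) = rtype T.
Proof. by case: a => [|c a] //=; case: T. Qed.

Lemma wf_rtype t : wf_tree d n t -> (rtype t < n)%N.
Proof. by case: t => [x|x ch] //= /and3P []. Qed.

Lemma wf_settype k t : (k < n)%N -> wf_tree d n t -> wf_tree d n (settype k t).
Proof. by case: t => [x|x ch] /= kn //= /and3P [_ -> ->]; rewrite kn. Qed.

Lemma wf_subtree t a : wf_tree d n t -> valid_path t a -> wf_tree d n (subtree_at t a).
Proof.
elim: a t => [|c a IH] [x|x ch] //= /and3P [_ _ wch] /andP [cs va].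
by apply: IH => //; apply: (allP wch); apply: mem_nth.
Qed.

Lemma valid_settype k t cs : valid_path t cs -> valid_path (settype k t) cs.
Proof.
case: cs => [|c cs] //; case: t => [x|x ch] //= /andP [h v].
by rewrite h (set_nth_default (GenTree.Node x ch) _ h).
Qed.

Lemma subtree_settype k t c cs : valid_path t (c :: cs) ->
  subtree_at (settype k t) (c :: cs) = subtree_at t (c :: cs).
Proof.
by case: t => [x|x ch] //= /andP [h _]; rewrite (set_nth_default (GenTree.Node x ch) _ h).
Qed.

Lemma subtree_replace T a s : valid_path T a -> subtree_at (replace_at T a s) a = s.
Proof.
elim: a T => [|c a IH] [x|x ch] //= /andP [cs va].
by rewrite set_nth_split // nth_cat size_take cs ltnn subnn /= IH.
Qed.

Lemma mu_word_mnm (ch : seq ttree) : mu n ch = word_mnm n (map rtype ch).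
Proof. by apply/mnmP => i; rewrite word_mnmE mnmE count_map. Qed.

End TreeSurgery.

Lemma regraft_cons m x ch c cs ts sibs : size ch = m.+1 ->
  regraft (GenTree.Node x ch) (c :: cs) ts sibs =
  GenTree.Node x (take c (take m sibs) ++
     regraft (if cs is [::] then nth (GenTree.Node x ch) ch c
              else settype (head 0%N ts) (nth (GenTree.Node x ch) ch c))
       cs (behead ts) (drop m sibs) :: drop c (take m sibs)).
Proof. by move=> sch; rewrite /= sch. Qed.

Section TreeWeights.
Variables (C : fieldType) (n m : nat) (H : 'I_n -> {mpoly C[n]}).

Lemma EH_node x ch : EH H (GenTree.Node x ch) = Hcoef H x (mu n ch) * \prod_(c <- ch) EH H c.
Proof.
rewrite /=; congr (_ * _); elim: ch => [|c ch IH]; first by rewrite big_nil.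
by rewrite big_cons -IH.
Qed.

Lemma EH_replace T a : valid_path T a -> exists K, forall s,
  rtype s = rtype (subtree_at T a) -> EH H (replace_at T a s) = K * EH H s.
Proof.
elim: a T => [|c a IH] T va; first by exists 1 => s _; rewrite mul1r.
case: T va => [x|x ch] // /andP [cs va].
have [K HK] := IH _ va.
exists (Hcoef H x (mu n ch) * (\prod_(y <- take c ch) EH H y) * K *
        \prod_(y <- drop c.+1 ch) EH H y) => s hs.
rewrite [replace_at _ _ _]/= EH_node set_nth_split // big_cat big_cons HK //.
have -> : mu n (take c ch ++ replace_at (nth (GenTree.Node x ch) ch c) a s :: drop c.+1 ch)
          = mu n ch.
  rewrite !mu_word_mnm [in RHS](nth_split (GenTree.Node x ch) cs) !map_cat /=.
  by rewrite rtype_replace.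
rewrite /=; ring.
Qed.

Lemma EH_regraft t cs ts sibs : (0 < n)%N -> wf_tree m.+1 n t -> valid_path t cs ->
  all (fun x => (x < n)%N) ts -> size sibs = (m * size cs)%N ->
  EH H (regraft t cs ts sibs) = (\prod_(x <- sibs) EH H x) * EH H (subtree_at t cs) *
    spine_weight m H (rtype t) (size cs) ts (map rtype sibs) (rtype (subtree_at t cs)).
Proof.
move=> n_gt0; elim: cs t ts sibs => [|c cs IH] t ts sibs wf vp ts_n ss.
  by move: ss; rewrite muln0 => /size0nil ->; rewrite /= big_nil mul1r mulr1.
case: t wf vp => [x|x ch] // /and3P [xn /eqP sch wch] /andP [cc vp].
rewrite (@regraft_cons m) //.
set v := nth (GenTree.Node x ch) ch c in vp *.
set v' := if cs is [::] then v else settype (head 0%N ts) v.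
set R := regraft v' cs (behead ts) (drop m sibs).
set S := take m sibs.
have wv : wf_tree m.+1 n v by apply: (allP wch); apply: mem_nth.
have h0 : (head 0%N ts < n)%N by move: ts_n; case: (ts) => [|y l] //= /andP [].
have wv' : wf_tree m.+1 n v' by rewrite /v'; case: (cs) => // *; apply: wf_settype.
have vv' : valid_path v' cs by rewrite /v'; case: (cs) vp => // *; apply: valid_settype.
have Hsub : subtree_at v' cs = subtree_at v cs.
  by rewrite /v'; case: (cs) vp => // c' cs' vp; apply: subtree_settype.
have Hk : (if size cs is 0 then rtype (subtree_at v cs) else head 0%N ts) = rtype v'.
  by rewrite /v'; case: (cs) => //= _ _; rewrite rtype_settype.
have ts_n' : all (fun x => (x < n)%N) (behead ts) by move: ts_n; case: (ts) => //= y l /andP [].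
have ss' : size (drop m sibs) = (m * size cs)%N by rewrite size_drop ss /= mulnS addKn.
rewrite EH_node.
have -> : mu n (take c S ++ R :: drop c S) = word_mnm n (rtype v' :: take m (map rtype sibs)).
  rewrite mu_word_mnm; apply: word_mnm_perm; rewrite map_cat /= rtype_regraft.
  apply/seq.permP => P /=; rewrite !count_cat /= addnCA -count_cat -map_cat cat_take_drop.
  by rewrite map_take.
rewrite big_cat big_cons /R IH // Hsub /= map_drop Hk.
have -> : \prod_(y <- sibs) EH H y =
    \prod_(y <- take c S) EH H y * \prod_(y <- drop c S) EH H y * \prod_(y <- drop m sibs) EH H y.
  by rewrite -!big_cat !cat_take_drop.
ring.
Qed.

End TreeWeights.

Fixpoint spine_types (t : ttree) (cs : seq nat) : seq nat :=
  match cs with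
  | [::] => [::]
  | c :: cs' => match t with
                | GenTree.Leaf _ => [::]
                | GenTree.Node _ ch =>
                    let v := nth t ch c in
                    if cs' is [::] then [::] else rtype v :: spine_types v cs'
                end
  end.

Section Shuffle.
Variables (n m : nat).

Lemma regraftK t cs ts sibs : wf_tree m.+1 n t -> valid_path t cs ->
  all (fun x => (x < n)%N) ts -> size sibs = (m * size cs)%N -> size ts = (size cs).-1 ->
  spine_sibs (regraft t cs ts sibs) cs = sibs /\ spine_types (regraft t cs ts sibs) cs = ts.
Proof.
elim: cs t ts sibs => [|c cs IH] t ts sibs wf vp ts_n ss sts.
  by move: ss sts; rewrite muln0 => /size0nil -> /size0nil ->.
case: t wf vp => [x|x ch] // /and3P [xn /eqP sch wch] /andP [cc vp].
rewrite (@regraft_cons m) //.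
set v := nth (GenTree.Node x ch) ch c in vp *.
set v' := if cs is [::] then v else settype (head 0%N ts) v.
set R := regraft v' cs (behead ts) (drop m sibs).
set S := take m sibs.
have wv : wf_tree m.+1 n v by apply: (allP wch); apply: mem_nth.
have wv' : wf_tree m.+1 n v'.
  rewrite /v'; case: (cs) sts => // c' cs' sts1; apply: wf_settype => //.
  by case: (ts) ts_n sts1 => //= y l /andP [].
have vv' : valid_path v' cs by rewrite /v'; case: (cs) vp => // *; apply: valid_settype.
have ts_n' : all (fun x => (x < n)%N) (behead ts) by move: ts_n; case: (ts) => //= y l /andP [].
have ss' : size (drop m sibs) = (m * size cs)%N by rewrite size_drop ss /= mulnS addKn.
have sts' : size (behead ts) = (size cs).-1 by rewrite size_behead sts.
have [IH1 IH2] := IH v' (behead ts) (drop m sibs) wv' vv' ts_n' ss' sts'.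
have sS : size S = m by rewrite size_takel // ss /= mulnS leq_addr.
have cm : (c <= m)%N by rewrite -ltnS -sch.
have stc : size (take c S) = c by rewrite size_takel // sS.
have Hn : nth (GenTree.Node x (take c S ++ R :: drop c S)) (take c S ++ R :: drop c S) c = R.
  by rewrite nth_cat stc ltnn subnn.
split.
  rewrite /= Hn take_size_cat // drop_cat stc ltnNge leqnSn subSnn /= -/R IH1.
  by rewrite drop0 catA !cat_take_drop.
rewrite /= Hn IH2 rtype_regraft; move: sts; rewrite /v'.
case: (cs) => [|c' cs'] sts; first by case: (ts) sts.
by rewrite rtype_settype; case: (ts) sts.
Qed.

Lemma size_spine_sibs t cs : wf_tree m.+1 n t -> valid_path t cs ->
  size (spine_sibs t cs) = (m * size cs)%N.
Proof.
elim: cs t => [|c cs IH] t; first by rewrite muln0.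
case: t => [x|x ch] // /and3P [_ /eqP sch wch] /andP [cc vp].
have wv : wf_tree m.+1 n (nth (GenTree.Node x ch) ch c) by apply: (allP wch); apply: mem_nth.
rewrite /= !size_cat IH // size_take size_drop sch -sch cc sch mulnS addnA subSS.
by rewrite [(c + _)%N]addnC subnK // -ltnS -sch.
Qed.

Lemma all_wf_spine_sibs t cs : wf_tree m.+1 n t -> valid_path t cs ->
  all (wf_tree m.+1 n) (spine_sibs t cs).
Proof.
elim: cs t => [|c cs IH] t //.
case: t => [x|x ch] // /and3P [_ _ wch] /andP [cc vp].
have wv : wf_tree m.+1 n (nth (GenTree.Node x ch) ch c) by apply: (allP wch); apply: mem_nth.
rewrite /= !all_cat IH // andbT; apply/andP; split; apply/allP => y hy; apply: (allP wch).
  exact: mem_take hy.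
exact: mem_drop hy.
Qed.

Lemma shuffle_classE T a cs : wf_tree m.+1 n T -> valid_path T a ->
  valid_path (subtree_at T a) cs ->
  shuffle_class n T a cs =
  [seq replace_at T a (regraft (subtree_at T a) cs ts sibs)
     | sibs <- permutations (spine_sibs (subtree_at T a) cs),
       ts <- typeseqs (size cs).-1 n].
Proof.
move=> wT va vc; set t0 := subtree_at T a in vc *.
have wt0 : wf_tree m.+1 n t0 by exact: wf_subtree.
pose recover X := (spine_sibs (subtree_at X a) cs, spine_types (subtree_at X a) cs).
have recoverK sibs ts : sibs \in permutations (spine_sibs t0 cs) ->
    ts \in typeseqs (size cs).-1 n ->
    recover (replace_at T a (regraft t0 cs ts sibs)) = (sibs, ts).
  rewrite mem_permutations mem_typeseqs => /perm_size ss /andP [/eqP sts ts_n].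
  rewrite /recover subtree_replace //.
  by have [-> ->] := regraftK wt0 vc ts_n (etrans ss (size_spine_sibs wt0 vc)) sts.
rewrite /shuffle_class -/t0 undup_id //.
apply: allpairs_uniq; [exact: permutations_uniq | exact: typeseqs_uniq |].
move=> [s1 t1] [s2 t2] /allpairsP [[? ?] /= [s1S t1n [-> ->]]].
by move=> /allpairsP [[? ?] /= [s2S t2n [-> ->]]] /(congr1 recover); rewrite !recoverK.
Qed.

End Shuffle.

Lemma sum_EH_shuffle_class (C : fieldType) n m (H : 'I_n -> {mpoly C[n]}) T a cs :
  (0 < n)%N -> wf_tree m.+1 n T -> valid_path T a -> valid_path (subtree_at T a) cs ->
  let t0 := subtree_at T a in
  exists K, \sum_(T' <- shuffle_class n T a cs) EH H T' =
    K * \sum_(sibs <- permutations (spine_sibs t0 cs))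
          \sum_(ts <- typeseqs (size cs).-1 n)
            spine_weight m H (rtype t0) (size cs) ts (map rtype sibs) (rtype (subtree_at t0 cs)).
Proof.
move=> n_gt0 wT va vc t0; have wt0 : wf_tree m.+1 n t0 by exact: wf_subtree.
have [K EH_T] := EH_replace H va.
exists (K * (\prod_(x <- spine_sibs t0 cs) EH H x) * EH H (subtree_at t0 cs)).
rewrite (shuffle_classE wT) // big_allpairs_dep /= mulr_sumr; apply: eq_big_seq => sibs.
rewrite mem_permutations => Ssibs; rewrite mulr_sumr; apply: eq_big_seq => ts.
rewrite mem_typeseqs => /andP [_ ts_n].
rewrite EH_T ?rtype_regraft // (EH_regraft H n_gt0 wt0 vc ts_n); last first.
  by rewrite (perm_size Ssibs) (size_spine_sibs wt0).
by rewrite (perm_big _ Ssibs) !mulrA.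
Qed.

Theorem lemma3p6 (R : realType) (d n p : nat)
    (H : 'I_n -> {mpoly (complex R)[n]}) :
  (2 <= d)%N -> (1 <= n)%N -> (1 <= p <= n)%N ->
  (forall i, H i \is d.-homog) ->
  (jacobian H) ^+ p = 0 ->
  forall (T : ttree) (a cs : seq nat),
    wf_tree d n T ->
    valid_path T a ->
    size cs = p ->
    valid_path (subtree_at T a) cs ->
    \sum_(T' <- shuffle_class n T a cs) EH H T' = 0.
Proof.
move=> d2 n_gt0 /andP [p_gt0 _] homH Hp T a cs wT va scs vc.
case: d d2 homH wT => [|m] // _ homH wT.
have [K ->] := sum_EH_shuffle_class H n_gt0 wT va vc.
set t0 := subtree_at T a in vc *.
have wt0 : wf_tree m.+1 n t0 by exact: wf_subtree.
have i_n : (rtype t0 < n)%N by exact: wf_rtype wt0.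
have j_n : (rtype (subtree_at t0 cs) < n)%N by exact: wf_rtype (wf_subtree wt0 vc).
pose G u := \sum_(ts <- typeseqs p.-1 n)
  spine_weight m H (rtype t0) p ts u (rtype (subtree_at t0 cs)).
rewrite scs (sum_permutations_map_eq0 (G := G)) ?mulr0 //.
apply: (@sum_permutations_spine_weight_eq0 _ n m H homH p (Ordinal i_n) (Ordinal j_n)) => //.
  by rewrite size_map (size_spine_sibs wt0) // scs.
apply/allP => _ /mapP [y yS ->]; apply: wf_rtype.
exact: (allP (all_wf_spine_sibs wt0 vc)).
Qed.
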